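(* Let $D$ be a poset whose order takes values in a universe $\mathcal T$, and $\mathcal V$ a universe. The relation $\sqsubseteq$ on $\mathcal L_{\mathcal V}(D)$, valued in $\mathcal V\sqcup\mathcal T$, given by $(P,\varphi)\sqsubseteq(Q,\psi) :\equiv \Sigma_{f:P\to Q}\,\Pi_{p:P}\,\big(\varphi(p)\sqsubseteq_D\psi(f(p))\big)$, is a partial order on $\mathcal L_{\mathcal V}(D)$.
   Context: Setting: intensional Martin-Löf type theory with universes, function extensionality, propositional extensionality and propositional truncations; no resizing, excluded middle or choice. A poset is a type with a proposition-valued reflexive, transitive, antisymmetric relation; a partial order is such a relation. The lifting is $\mathcal L_{\mathcal V}(D) :\equiv \Sigma_{P:\Omega_{\mathcal V}}(P\to D)$, where $\Omega_{\mathcal V}$ is the type of propositions in $\mathcal V$. *)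

Definition isProp (A : Type) : Type := forall x y : A, x = y.

Record is_partial_order {X : Type} (R : X -> X -> Type) : Type := {
  po_prop    : forall x y : X, isProp (R x y);
  po_refl    : forall x : X, R x x;
  po_trans   : forall x y z : X, R x y -> R y z -> R x z;
  po_antisym : forall x y : X, R x y -> R y x -> x = y
}.

(* The lifting L_V(D) := Σ (P : Ω_V), (P -> D), with Ω_V rendered as Prop. *)
Definition lifting (D : Type) : Type := { P : Prop & P -> D }.

Definition lift_le {D : Type} (le : D -> D -> Type) (u v : lifting D) : Type :=
  { f : projT1 u -> projT1 v & forall p : projT1 u, le (projT2 u p) (projT2 v (f p)) }.

(** Since the support of an element of the lifting is a proposition, a map
    [f : P -> Q] between supports is unique, so [lift_le] is a proposition and
    mutual comparability gives [P = Q] by propositional extensionality; over a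
    common support [f] is the identity and antisymmetry of [le] identifies the
    two partial maps pointwise. *)

From Stdlib Require Import FunctionalExtensionality ProofIrrelevance PropExtensionality.

Lemma isProp_Prop (P : Prop) : isProp P.
Proof. exact (proof_irrelevance P). Qed.

Lemma isProp_forall {A : Type} {B : A -> Type} :
  (forall a, isProp (B a)) -> isProp (forall a, B a).
Proof.
  intros HB f g. apply functional_extensionality_dep. intros a. apply HB.
Qed.

Lemma isProp_sigT {A : Type} {B : A -> Type} :
  isProp A -> (forall a, isProp (B a)) -> isProp {a : A & B a}.
Proof.
  intros HA HB [a b] [a' b']. destruct (HA a a'). f_equal. apply HB.
Qed.

Lemma lifting_eq {D : Type} (u v : lifting D)
    (f : projT1 u -> projT1 v) (g : projT1 v -> projT1 u) :
  (forall p, projT2 u p = projT2 v (f p)) -> u = v.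
Proof.
  destruct u as [P phi], v as [Q psi]; simpl in *. intros Hphi.
  assert (PQ : P = Q) by (apply propositional_extensionality; split; assumption).
  subst Q. f_equal. apply functional_extensionality. intros p.
  rewrite Hphi. f_equal. apply isProp_Prop.
Qed.

Section LiftingOrder.

Variables (D : Type) (le : D -> D -> Type).
Hypothesis le_po : is_partial_order le.

Lemma lift_le_isProp (u v : lifting D) : isProp (lift_le le u v).
Proof.
  apply isProp_sigT.
  - apply isProp_forall. intros p. apply isProp_Prop.
  - intros f. apply isProp_forall. intros p. apply (po_prop _ le_po).
Qed.

Lemma lift_le_refl (u : lifting D) : lift_le le u u.
Proof.
  exists (fun p => p). intros p. apply (po_refl _ le_po).
Qed.

Lemma lift_le_trans (u v w : lifting D) :
  lift_le le u v -> lift_le le v w -> lift_le le u w.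
Proof.
  intros [f Hf] [g Hg]. exists (fun p => g (f p)). intros p.
  exact (po_trans _ le_po _ _ _ (Hf p) (Hg (f p))).
Qed.

Lemma lift_le_antisym (u v : lifting D) :
  lift_le le u v -> lift_le le v u -> u = v.
Proof.
  intros [f Hf] [g Hg]. apply (lifting_eq u v f g). intros p.
  apply (po_antisym _ le_po); [apply Hf |].
  rewrite <- (isProp_Prop _ (g (f p)) p) at 2. apply Hg.
Qed.

End LiftingOrder.

Theorem proposition5p19 (D : Type) (le : D -> D -> Type) :
  is_partial_order le -> is_partial_order (lift_le le).
Proof.
  intros le_po. split.
  - exact (lift_le_isProp D le le_po).
  - exact (lift_le_refl D le le_po).
  - exact (lift_le_trans D le le_po).
  - exact (lift_le_antisym D le le_po).
Qed.
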